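(* For every field $\mathbb{K}$, $\mathcal{G}+\mathcal{G}=\mathbb{K}((t^{-1}))$.
   Context: $\mathbb{K}((t^{-1}))$ is the field of formal Laurent series $\sum_{n=-\infty}^{\infty}\alpha_n t^{-n}$ over the field $\mathbb{K}$ (only finitely many nonzero $\alpha_n$ with $n<0$), with $\deg\alpha=\sup\{-n:\alpha_n\ne0\}$. Every $\alpha$ has a unique continued fraction expansion $[a_0;a_1,a_2,\dots]$ with $a_n\in\mathbb{K}[t]$, $\deg a_n\ge1$ for $n\ge1$, finite iff $\alpha\in\mathbb{K}(t)$. $a_n(\alpha)$ is the $n$-th partial quotient and $d_n(\alpha)=\deg a_n(\alpha)$. $\mathcal{G}=\{\alpha\in\mathbb{K}((t^{-1})):d_n(\alpha)\to\infty\}\cup\mathbb{K}(t)$. *)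

From mathcomp Require Import all_boot all_order all_algebra.
Set Implicit Arguments. Unset Strict Implicit. Unset Printing Implicit Defensive.
Import Order.TTheory GRing.Theory Num.Theory.
Local Open Scope ring_scope.

(* A formal Laurent series in t^{-1} over K is represented by its coefficient
   function c : int -> K, where c n is the coefficient of t^n, subject to
   c n = 0 for all sufficiently large n (finitely many positive powers). *)

Section Laurent.
Variable K : fieldType.

Definition lbounded (f : int -> K) (N : nat) : Prop :=
  forall n : int, (N%:Z < n) -> f n = 0.

Definition is_laurent (f : int -> K) : Prop := exists N : nat, lbounded f N.

(* Cauchy product, valid when both factors vanish above N:
   (f g)_n = sum_{i = n-N}^{N} f_i g_{n-i}  (empty/zero terms otherwise). *)
Definition lmulN (N : nat) (f g : int -> K) (n : int) : K :=
  \sum_(k < `|(2 * N + 1)%N%:Z - n|%N) f (N%:Z - k%:Z) * g (n - N%:Z + k%:Z).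

Definition lmul_eq (f g h : int -> K) : Prop :=
  exists N : nat, lbounded f N /\ lbounded g N /\ forall n, h n = lmulN N f g n.

Definition polyL (p : {poly K}) (n : int) : K :=
  match n with Posz m => p`_m | Negz _ => 0 end.

Definition is_ratfun (alpha : int -> K) : Prop :=
  exists p q : {poly K}, q != 0 /\ lmul_eq (polyL q) alpha (polyL p).

(* (a, x) is the (infinite) continued fraction expansion of alpha:
   x n are the complete quotients, x 0 = alpha, a n = polynomial part of x n,
   and x (n+1) = 1 / (x n - a n).  Such data exist (and are unique) exactly
   when alpha is not in K(t); a n is then the n-th partial quotient. *)
Definition cf_expansion (alpha : int -> K) (a : nat -> {poly K})
    (x : nat -> int -> K) : Prop :=
  x 0%N = alpha /\
  forall n : nat,
    is_laurent (x n) /\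
    (forall m : int, 0 <= m -> x n m = polyL (a n) m) /\
    lmul_eq (fun m => x n m - polyL (a n) m) (x n.+1) (polyL 1).

Definition degs_to_infty (a : nat -> {poly K}) : Prop :=
  forall M : nat, exists N : nat, forall n : nat, (N <= n)%N -> (M <= (size (a n)).-1)%N.

Definition inG (alpha : int -> K) : Prop :=
  is_ratfun alpha \/
  exists a x, cf_expansion alpha a x /\ degs_to_infty a.

End Laurent.

From HB Require Import structures.
From mathcomp Require Import all_boot all_order all_algebra.
From mathcomp Require Import boolp.
From Stdlib Require Import ClassicalEpsilon.
From mathcomp Require Import ring zify.
Set Implicit Arguments. Unset Strict Implicit. Unset Printing Implicit Defensive.
Import Order.TTheory GRing.Theory Num.Theory.
Local Open Scope ring_scope.

(* Work in the fraction field of K[[1/t]], which contains K((1/t)) and carries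
   the degree in t.  A rational alpha is alpha + 0.  Otherwise build beta and
   gamma through their continued fractions, adding one partial quotient to each
   in turn.  If P/Q, P'/Q' are the last two convergents of the summand being
   extended and e = alpha - beta_n - gamma_n is the current error, of degree -H,
   take as next partial quotient the polynomial part of the complete quotient of
   P/Q + e.  It has degree H - 2 deg Q, and the new error has degree below
   -2 (H - deg Q) = -2 deg Q_new, so the invariant "H - 2 deg Q >= k + 1 after k
   steps" propagates.  Hence the partial quotient degrees tend to infinity, both
   continued fractions converge, and the errors tend to 0, so alpha = beta + gamma. *)

(** * Formal power series *)

Section FormalPowerSeries.
Variable K : fieldType.

Record fps := FPS { fcoef : nat -> K }.

HB.instance Definition _ := gen_eqMixin fps.
HB.instance Definition _ := gen_choiceMixin fps.

Lemma fps_ext (f g : fps) : fcoef f =1 fcoef g -> f = g.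
Proof. by case: f g => f [g] /= /funext ->. Qed.

Definition fps0 := FPS (fun _ => 0).
Definition fps_opp f := FPS (fun n => - fcoef f n).
Definition fps_add f g := FPS (fun n => fcoef f n + fcoef g n).

Lemma fps_addA : associative fps_add.
Proof. by move=> f g h; apply: fps_ext => n /=; rewrite addrA. Qed.
Lemma fps_addC : commutative fps_add.
Proof. by move=> f g; apply: fps_ext => n /=; rewrite addrC. Qed.
Lemma fps_add0 : left_id fps0 fps_add.
Proof. by move=> f; apply: fps_ext => n /=; rewrite add0r. Qed.
Lemma fps_addN : left_inverse fps0 fps_opp fps_add.
Proof. by move=> f; apply: fps_ext => n /=; rewrite addNr. Qed.

HB.instance Definition _ :=
  GRing.isZmodule.Build fps fps_addA fps_addC fps_add0 fps_addN.

Definition fps_trunc (n : nat) (f : fps) : {poly K} := \poly_(i < n.+1) fcoef f i.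
Definition fps1 := FPS (fun n => (n == 0)%:R).
Definition fps_mul f g :=
  FPS (fun n => \sum_(i < n.+1) fcoef f i * fcoef g (n - i)).

Lemma coef_fps_trunc m f i : (i <= m)%N -> (fps_trunc m f)`_i = fcoef f i.
Proof. by move=> h; rewrite /fps_trunc coef_poly ltnS h. Qed.

Lemma fps_mul_trunc f g m n : (n <= m)%N ->
  fcoef (fps_mul f g) n = (fps_trunc m f * fps_trunc m g)`_n.
Proof.
move=> le; rewrite coefM /=; apply: eq_bigr => [[i hi]] _ /=.
have him : (i <= m)%N by apply: leq_trans le; rewrite -ltnS.
by rewrite !coef_fps_trunc // (leq_trans (leq_subr _ _) le).
Qed.

Lemma fps_mulA : associative fps_mul.
Proof.
move=> f g h; apply: fps_ext => n.
have -> : fcoef (fps_mul f (fps_mul g h)) n =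
    (fps_trunc n f * (fps_trunc n g * fps_trunc n h))`_n.
  rewrite coefM; apply: eq_bigr => [[i hi]] _.
  by rewrite coef_fps_trunc // (fps_mul_trunc _ _ (leq_subr i n)).
have -> : fcoef (fps_mul (fps_mul f g) h) n =
    ((fps_trunc n f * fps_trunc n g) * fps_trunc n h)`_n.
  rewrite coefM; apply: eq_bigr => [[i hi]] _.
  by rewrite (coef_fps_trunc _ (leq_subr i n)) (fps_mul_trunc _ _ (hi : (i <= n)%N)).
by rewrite mulrA.
Qed.

Lemma fps_mulC : commutative fps_mul.
Proof.
by move=> f g; apply: fps_ext => n; rewrite !(fps_mul_trunc _ _ (leqnn n)) mulrC.
Qed.

Lemma fps_trunc1 n : fps_trunc n fps1 = 1.
Proof.
apply/polyP => i; rewrite /fps_trunc coef_poly coef1 /=.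
by case: ifP => // /negbT; rewrite -leqNgt; case: i.
Qed.

Lemma fps_mul1 : left_id fps1 fps_mul.
Proof.
move=> f; apply: fps_ext => n.
by rewrite (fps_mul_trunc _ _ (leqnn n)) fps_trunc1 mul1r coef_fps_trunc.
Qed.

Lemma fps_mulDl : left_distributive fps_mul fps_add.
Proof.
move=> f g h; apply: fps_ext => n /=.
by rewrite -big_split /=; apply: eq_bigr => i _; rewrite mulrDl.
Qed.

Lemma fps1_neq0 : fps1 != fps0.
Proof. by apply/eqP => /(congr1 (fcoef^~ 0%N)) /= /eqP; rewrite oner_eq0. Qed.

HB.instance Definition _ := GRing.Zmodule_isComNzRing.Build fps
  fps_mulA fps_mulC fps_mul1 fps_mulDl fps1_neq0.

Lemma fcoef0 n : fcoef (0 : fps) n = 0. Proof. by []. Qed.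
Lemma fcoefD (f g : fps) n : fcoef (f + g) n = fcoef f n + fcoef g n. Proof. by []. Qed.
Lemma fcoefN (f : fps) n : fcoef (- f) n = - fcoef f n. Proof. by []. Qed.
Lemma fcoefB (f g : fps) n : fcoef (f - g) n = fcoef f n - fcoef g n. Proof. by []. Qed.
Lemma fcoef1 n : fcoef (1 : fps) n = (n == 0)%:R. Proof. by []. Qed.
Lemma fcoefM (f g : fps) n :
  fcoef (f * g) n = \sum_(i < n.+1) fcoef f i * fcoef g (n - i).
Proof. by []. Qed.
Lemma fcoefM_trunc (f g : fps) m n : (n <= m)%N ->
  fcoef (f * g) n = (fps_trunc m f * fps_trunc m g)`_n.
Proof. exact: fps_mul_trunc. Qed.
Lemma fcoefM0 (f g : fps) : fcoef (f * g) 0 = fcoef f 0 * fcoef g 0.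
Proof. by rewrite fcoefM big_ord1. Qed.

Lemma fps_lowest_coef (f : fps) : f != 0 ->
  exists m, fcoef f m != 0 /\ forall i, (i < m)%N -> fcoef f i = 0.
Proof.
move=> nz; have ex : exists n, (fun n => fcoef f n != 0) n.
  apply: contrapT => H; move/eqP: nz; apply; apply: fps_ext => n.
  by apply/eqP; apply: contrapT => Hn; apply: H; exists n; apply/negP.
exists (ex_minn ex); case: ex_minnP => m Hm Hmin; split => // i Hi.
by apply/eqP; apply: contraTT Hi => /Hmin; rewrite -leqNgt.
Qed.

Lemma fps_mul_eq0 (f g : fps) : f * g = 0 -> (f == 0) || (g == 0).
Proof.
move=> H; case: (boolP (f == 0)) => // /fps_lowest_coef [m [Hm Hm0]].
case: (boolP (g == 0)) => // /fps_lowest_coef [k [Hk Hk0]]; exfalso.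
move/(congr1 (fcoef^~ (m + k))): H; rewrite fcoefM fcoef0.
have hm : (m < (m + k).+1)%N by rewrite ltnS leq_addr.
rewrite (bigD1 (Ordinal hm)) //= big1 ?addr0 ?addKn.
  by move/eqP; rewrite mulf_eq0 (negbTE Hm) (negbTE Hk).
move=> [i hi] /= /eqP Hne.
have [lt|ge] := ltnP i m; first by rewrite Hm0 ?mul0r.
rewrite Hk0 ?mulr0 //.
have gt : (m < i)%N.
  by rewrite ltn_neqAle ge andbT eq_sym; apply/eqP => E; apply: Hne; apply: val_inj.
by rewrite ltn_subLR ?ltn_add2r // -ltnS.
Qed.

(* Only the existence of inverses matters (to form the fraction field), so
   they are chosen classically. *)
Definition fps_unit (f : fps) : bool := `[< exists g, g * f = 1 >].
Definition fps_inv (f : fps) : fps :=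
  if fps_unit f then epsilon (inhabits f) (fun g => g * f = 1) else f.

Lemma fps_mulV : {in fps_unit, left_inverse 1 fps_inv *%R}.
Proof.
move=> f H; rewrite /fps_inv (_ : fps_unit f = true) //.
by apply: (epsilon_spec (inhabits f) (fun g => g * f = 1)); apply/asboolP.
Qed.

Lemma fps_unitP (f g : fps) : g * f = 1 -> fps_unit f.
Proof. by move=> H; apply/asboolP; exists g. Qed.

Lemma fps_inv_out : {in [predC fps_unit], fps_inv =1 id}.
Proof. by move=> f /negPf fN; rewrite /fps_inv -[fps_unit f]/(f \in fps_unit) fN. Qed.

HB.instance Definition _ :=
  GRing.ComNzRing_hasMulInverse.Build fps fps_mulV fps_unitP fps_inv_out.
HB.instance Definition _ := GRing.ComUnitRing_isIntegral.Build fps fps_mul_eq0.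

Definition fpsC (c : K) : fps := FPS (fun n => if n == 0%N then c else 0).

Lemma fpsC_is_zmod_morphism : zmod_morphism fpsC.
Proof.
by move=> a b; apply: fps_ext => n; rewrite fcoefB /=; case: (n == 0%N); rewrite ?subr0.
Qed.
HB.instance Definition _ :=
  GRing.isZmodMorphism.Build K fps fpsC fpsC_is_zmod_morphism.

Lemma fpsC_is_monoid_morphism : monoid_morphism fpsC.
Proof.
split; first by apply: fps_ext => n; rewrite fcoef1 /=; case: (n == 0%N).
move=> a b; apply: fps_ext => n; rewrite fcoefM /=.
case: n => [|n]; first by rewrite big_ord1.
rewrite big1 // => [[[|i] hi]] _ /=; last by rewrite mul0r.
by rewrite ?subn0 mulr0.
Qed.
HB.instance Definition _ :=
  GRing.isMonoidMorphism.Build K fps fpsC fpsC_is_monoid_morphism.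

Definition fpsX : fps := FPS (fun n => (n == 1%N)%:R).

Lemma fps_truncX n : fps_trunc n.+1 fpsX = 'X.
Proof.
apply/polyP => i; rewrite /fps_trunc coef_poly coefX /=.
by case: ifP => // /negbT; rewrite -leqNgt; case: i => [|[|i]].
Qed.

Lemma fcoefXM (f : fps) n : fcoef (fpsX * f) n = if n == 0%N then 0 else fcoef f n.-1.
Proof.
rewrite (fcoefM_trunc _ _ (leqnSn n)) fps_truncX coefXM.
by case: n => [|n] //=; rewrite coef_fps_trunc // leqW.
Qed.

Lemma fcoefXnM m (f : fps) n :
  fcoef (fpsX ^+ m * f) n = if (m <= n)%N then fcoef f (n - m) else 0.
Proof.
elim: m n => [|m IH] n; first by rewrite expr0 mul1r subn0.
by rewrite exprS -mulrA fcoefXM IH; case: n => [|n] //=; rewrite ltnS subSS.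
Qed.

Lemma fpsX_neq0 : fpsX != 0.
Proof. by apply/eqP => /(congr1 (fcoef^~ 1%N)) /= /eqP; rewrite oner_eq0. Qed.

Lemma fps_factorXn (f : fps) m : (forall i, (i < m)%N -> fcoef f i = 0) ->
  f = fpsX ^+ m * FPS (fun n => fcoef f (n + m)).
Proof.
move=> H; apply: fps_ext => n; rewrite fcoefXnM /=.
by case: leqP => h; [rewrite subnK | rewrite H].
Qed.

Section Inverse.
Variable f : fps.
Hypothesis f0 : fcoef f 0 != 0.
Let c := fcoef f 0.

(* [inv_trunc n] is the inverse of [f] modulo [X^n.+1]. *)
Fixpoint inv_trunc (n : nat) : {poly K} :=
  match n with
  | 0 => (c^-1)%:P
  | n.+1 => inv_trunc n +
      (- c^-1 * (fps_trunc n.+1 f * inv_trunc n)`_n.+1) *: 'X^(n.+1)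
  end.

Lemma size_inv_trunc n : (size (inv_trunc n) <= n.+1)%N.
Proof.
elim: n => [|n IH] /=; first by rewrite size_polyC; case: (_ != 0).
rewrite (leq_trans (size_polyD _ _)) // geq_max (leq_trans IH) //.
by rewrite (leq_trans (size_scale_leq _ _)) // size_polyXn.
Qed.

Lemma coef_inv_trunc n m i : (i <= n)%N -> (n <= m)%N ->
  (inv_trunc m)`_i = (inv_trunc n)`_i.
Proof.
move=> hi; elim: m => [|m IH]; first by rewrite leqn0 => /eqP ->.
rewrite leq_eqVlt => /orP [/eqP -> //| h].
rewrite /= coefD coefZ coefXn (IH h) (_ : (i == m.+1) = false) ?mulr0 ?addr0 //.
by apply/negbTE; rewrite neq_ltn (leq_ltn_trans hi h).
Qed.

Lemma inv_truncP n i : (i <= n)%N ->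
  (fps_trunc n f * inv_trunc n)`_i = (i == 0%N)%:R.
Proof.
elim: n i => [|n IH] i hi.
  rewrite leqn0 in hi; rewrite (eqP hi) coefM big_ord1 /= coefC /= coef_fps_trunc //.
  by rewrite mulfV.
rewrite /= mulrDr coefD -scalerAr coefZ coefMXn.
move: hi; rewrite leq_eqVlt => /orP [/eqP ->|hi].
  by rewrite ltnn subnn coef_fps_trunc // -/c !mulNr mulrAC mulVf // mul1r addrN.
rewrite hi mulr0 addr0 -IH; last by rewrite -ltnS.
rewrite !coefM; apply: eq_bigr => [[j hj]] _ /=.
have hjn : (j <= n)%N by rewrite -ltnS (leq_trans hj).
by rewrite !coef_fps_trunc // ltnW.
Qed.

Definition fps_inverse : fps := FPS (fun n => (inv_trunc n)`_n).

Lemma fps_trunc_inverse n : fps_trunc n fps_inverse = inv_trunc n.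
Proof.
apply/polyP => i; rewrite /fps_trunc coef_poly /=.
case: ltnP => h; first by rewrite (@coef_inv_trunc i n i).
by rewrite nth_default // (leq_trans (size_inv_trunc n)).
Qed.

Lemma fps_inverseK : fps_inverse * f = 1.
Proof.
apply: fps_ext => n.
by rewrite (fcoefM_trunc _ _ (leqnn n)) fps_trunc_inverse mulrC inv_truncP.
Qed.

End Inverse.

Lemma fps_invertible (f : fps) : fcoef f 0 != 0 ->
  exists g : fps, fcoef g 0 != 0 /\ g * f = 1.
Proof.
move=> H; exists (fps_inverse f); split; last exact: fps_inverseK.
apply: contra_eq_neq (congr1 (fcoef^~ 0%N) (fps_inverseK H)) => E.
by rewrite fcoefM0 E mul0r fcoef1 eq_sym oner_neq0.
Qed.

End FormalPowerSeries.

(** * The degree on the fraction field of [K[[1/t]]] *)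

Section Degree.
Variable K : fieldType.
Local Notation fps := (fps K).
Local Notation F := {fraction fps}.
Local Notation "x %:F" := (@FracField.tofrac fps x).

(* The variable of the power series ring is [1/t], so [K((1/t))] sits inside
   [F], and [a%:F * tinv ^ (- k)] with [a : fps] is a Laurent series of
   degree at most [k] in [t]. *)
Definition tinv : F := (fpsX K)%:F.

Lemma tinv_neq0 : tinv != 0.
Proof. by rewrite tofrac_eq0 fpsX_neq0. Qed.

Lemma tinvXn (n : nat) : tinv ^ n%:Z = (fpsX K ^+ n)%:F.
Proof. by rewrite tofracXn. Qed.

Lemma tinvD (a b : int) : tinv ^ (a + b) = tinv ^ a * tinv ^ b.
Proof. exact: expfzDr tinv_neq0. Qed.

Definition deg_le (x : F) (k : int) := exists a : fps, x = a%:F * tinv ^ (- k).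
Definition deg_eq (x : F) (k : int) :=
  exists a : fps, fcoef a 0 != 0 /\ x = a%:F * tinv ^ (- k).

Lemma deg_le0 k : deg_le 0 k.
Proof. by exists 0; rewrite tofrac0 mul0r. Qed.

Lemma deg_leD x y k : deg_le x k -> deg_le y k -> deg_le (x + y) k.
Proof. by move=> [a ->] [b ->]; exists (a + b); rewrite tofracD mulrDl. Qed.

Lemma deg_leN x k : deg_le x k -> deg_le (- x) k.
Proof. by move=> [a ->]; exists (- a); rewrite tofracN mulNr. Qed.

Lemma deg_leB x y k : deg_le x k -> deg_le y k -> deg_le (x - y) k.
Proof. by move=> hx /deg_leN; apply: deg_leD. Qed.

Lemma deg_leM x y k l : deg_le x k -> deg_le y l -> deg_le (x * y) (k + l).
Proof.
by move=> [a ->] [b ->]; exists (a * b); rewrite tofracM opprD tinvD mulrACA.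
Qed.

Lemma deg_leW x k l : deg_le x k -> k <= l -> deg_le x l.
Proof.
move=> [a ->] kl; set m := `|l - k|%N; exists (fpsX K ^+ m * a).
have -> : - k = m%:Z + - l by rewrite /m; lia.
by rewrite tinvD tinvXn tofracM; ring.
Qed.

Lemma deg_le_max x y k l :
  deg_le x k -> deg_le y l -> exists N : nat, deg_le x N%:Z /\ deg_le y N%:Z.
Proof.
move=> hx hy; exists (maxn `|k|%N `|l|%N).
by split; [apply: deg_leW hx _ | apply: deg_leW hy _]; lia.
Qed.

Lemma deg_eq_le x k : deg_eq x k -> deg_le x k.
Proof. by move=> [a [_ ->]]; exists a. Qed.

Lemma deg_eqM x y k l : deg_eq x k -> deg_eq y l -> deg_eq (x * y) (k + l).
Proof.
move=> [a [a0 ->]] [b [b0 ->]]; exists (a * b).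
by rewrite fcoefM0 mulf_neq0 // tofracM opprD tinvD mulrACA.
Qed.

Lemma deg_eq_neq0 x k : deg_eq x k -> x != 0.
Proof.
move=> [a [a0 ->]]; rewrite mulf_neq0 ?expfz_neq0 ?tinv_neq0 // tofrac_eq0.
by apply: contraNneq a0 => ->.
Qed.

Lemma deg_eqV x k : deg_eq x k -> deg_eq x^-1 (- k).
Proof.
move=> [a [a0 ->]]; have [g [g0 ga]] := fps_invertible a0.
have aF : a%:F != 0 by rewrite tofrac_eq0; apply: contraNneq a0 => ->.
exists g; split => //; rewrite invfM invr_expz; congr (_ * _).
by apply: (mulIf aF); rewrite -tofracM ga tofrac1 mulVf.
Qed.

Lemma deg_eqD x y k : deg_eq x k -> deg_le y (k - 1) -> deg_eq (x + y) k.
Proof.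
move=> [a [a0 ->]] [b ->]; exists (a + fpsX K * b).
rewrite fcoefD fcoefXM /= addr0 a0 tofracD mulrDl tofracM; split => //.
by rewrite (_ : - (k - 1) = 1 + - k) ?tinvD ?expr1z; [ring | lia].
Qed.

Lemma deg_eq_le_le x k l : deg_eq x k -> deg_le x l -> k <= l.
Proof.
move=> [a [a0 ->]] [b e]; rewrite leNgt; apply/negP => lk.
set n := `|k - l|%N; have n_gt0 : (0 < n)%N by rewrite /n; lia.
have e2 : a%:F = (fpsX K ^+ n * b)%:F.
  apply: (mulIf (expfz_neq0 (- k) tinv_neq0)); rewrite e.
  by rewrite (_ : - l = n%:Z + - k) ?tinvD ?tinvXn ?tofracM; [ring | rewrite /n; lia].
move/eqP: e2 a0; rewrite tofrac_eq => /eqP ->.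
by rewrite fcoefXnM leqNgt n_gt0 eqxx.
Qed.

Lemma deg_eq_uniq x k l : deg_eq x k -> deg_eq x l -> k = l.
Proof.
move=> h1 h2; apply/eqP; rewrite eq_le (deg_eq_le_le h1 (deg_eq_le h2)).
exact: deg_eq_le_le h2 (deg_eq_le h1).
Qed.

Lemma deg_le_eq x k : deg_le x k -> x != 0 -> exists2 l, l <= k & deg_eq x l.
Proof.
move=> [a ->] nz; have a0 : a != 0 by apply: contraNneq nz => ->; rewrite tofrac0 mul0r.
have [m [am0 am]] := fps_lowest_coef a0.
exists (k - m%:Z); first lia.
exists (FPS (fun n => fcoef a (n + m))); split => //.
rewrite {1}(fps_factorXn am) (_ : - (k - m%:Z) = m%:Z + - k); last lia.
by rewrite tinvD tinvXn tofracM; ring.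
Qed.

Lemma deg_le_eq0 x k : (forall n : nat, deg_le x (k - n%:Z)) -> x = 0.
Proof.
move=> H; apply/eqP; apply: contraT => nz.
have [l lk hl] := deg_le_eq (H 0%N) nz.
have := deg_eq_le_le hl (H `|k - l|%N.+1); lia.
Qed.

Lemma deg_le_lowP (a : fps) (B D : nat) :
  deg_le (a%:F * tinv ^ (- B%:Z)) (- D%:Z) <->
  forall i, (i < B + D)%N -> fcoef a i = 0.
Proof.
split => [[b e] i hi|h].
  have e2 : a%:F = (fpsX K ^+ (B + D) * b)%:F.
    apply: (mulIf (expfz_neq0 (- B%:Z) tinv_neq0)); rewrite e.
    by rewrite (_ : - - D%:Z = (B + D)%N%:Z + - B%:Z) ?tinvD ?tinvXn ?tofracM; [ring | lia].
  by move/eqP: e2; rewrite tofrac_eq => /eqP ->; rewrite fcoefXnM leqNgt hi.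
exists (FPS (fun n => fcoef a (n + (B + D)))); rewrite {1}(fps_factorXn h).
by rewrite (_ : - - D%:Z = (B + D)%N%:Z + - B%:Z) ?tinvD ?tinvXn ?tofracM; [ring | lia].
Qed.

End Degree.

(** * Polynomials and coefficient sequences *)

Section PolyEmbedding.
Variable K : fieldType.
Local Notation fps := (fps K).
Local Notation F := {fraction fps}.
Local Notation "x %:F" := (@FracField.tofrac fps x).
Local Notation tinv := (tinv K).

Definition constF : {rmorphism K -> F} := (@FracField.tofrac fps) \o (@fpsC K).

Definition polyF : {rmorphism {poly K} -> F} :=
  horner_morph (fun c : K => mulrC tinv^-1 (constF c)).

Lemma polyFC c : polyF c%:P = (fpsC c)%:F.
Proof. exact: horner_morphC. Qed.

Lemma polyFXn i : polyF 'X^i = tinv ^ (- i%:Z).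
Proof. by rewrite rmorphXn [polyF 'X]horner_morphX -exprz_inv. Qed.

Lemma fcoef_sum I (r : seq I) (P : pred I) (f : I -> fps) k :
  fcoef (\sum_(i <- r | P i) f i) k = \sum_(i <- r | P i) fcoef (f i) k.
Proof. by apply: (big_morph (fun g => fcoef g k)) => //= *; rewrite fcoefD. Qed.

(* The coefficients of [p] in reverse order, so that [p = fps_rev n p * t^n]. *)
Definition fps_rev (n : nat) (p : {poly K}) : fps :=
  FPS (fun k => if (k <= n)%N then p`_(n - k) else 0).

Lemma fps_revE n p :
  fps_rev n p = \sum_(j < n.+1) fpsC p`_(n - j) * fpsX K ^+ j.
Proof.
apply: fps_ext => k; rewrite fcoef_sum.
rewrite (eq_bigr (fun j : 'I_n.+1 => if (j : nat) == k then p`_(n - j) else 0)).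
  by rewrite -big_mkcond (big_ord1_eq _ (fun j => p`_(n - j))) ltnS.
move=> j _; rewrite mulrC fcoefXnM /=.
case: (leqP j k) => h; first by rewrite /= subn_eq0 eqn_leq h.
by rewrite (gtn_eqF h).
Qed.

Lemma polyF_rev (p : {poly K}) (n : nat) : (size p <= n.+1)%N ->
  polyF p = (fps_rev n p)%:F * tinv ^ (- n%:Z).
Proof.
move=> sp; have {1}-> : p = \sum_(i < n.+1) p`_i *: 'X^i.
  rewrite -poly_def; apply/polyP => i; rewrite coef_poly; case: ltnP => // h.
  by rewrite nth_default // (leq_trans sp h).
rewrite fps_revE !rmorph_sum mulr_suml [RHS](reindex_inj rev_ord_inj) /=.
apply: eq_bigr => [[i hi]] _ /=; rewrite subKn // -mul_polyC rmorphM polyFC polyFXn.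
rewrite tofracM -tinvXn -mulrA -tinvD; congr (_ * tinv ^ _); lia.
Qed.

Lemma deg_le_polyF (p : {poly K}) : deg_le (polyF p) (size p)%:Z.
Proof. by rewrite (polyF_rev (leqnSn _)); eexists. Qed.

Lemma deg_eq_polyF (p : {poly K}) : p != 0 -> deg_eq (polyF p) (size p).-1.
Proof.
move=> nz; rewrite (@polyF_rev p (size p).-1) ?prednK ?size_poly_gt0 //.
exists (fps_rev (size p).-1 p); split => //.
by rewrite /fps_rev /= subn0 -lead_coefE lead_coef_eq0.
Qed.

Lemma polyF_neq0 (p : {poly K}) : p != 0 -> polyF p != 0.
Proof. by move/deg_eq_polyF/deg_eq_neq0. Qed.

Lemma poly_part_exists x (n : nat) : deg_le x n ->
  exists c : {poly K}, deg_le (x - polyF c) (-1).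
Proof.
move=> [a ->]; set c := \poly_(i < n.+1) fcoef a (n - i); exists c.
rewrite (polyF_rev (size_poly _ _)) -mulrBl -tofracB.
have -> : -1 = - 1%N%:Z by [].
apply/(@deg_le_lowP _ _ n 1) => k; rewrite addn1 ltnS => hk.
by rewrite fcoefB /= hk coef_poly ltnS leq_subr subKn // subrr.
Qed.

End PolyEmbedding.

Section Coefficients.
Variable K : fieldType.
Local Notation fps := (fps K).
Local Notation F := {fraction fps}.
Local Notation "x %:F" := (@FracField.tofrac fps x).
Local Notation tinv := (tinv K).
Local Notation polyF := (polyF K).

(* The coefficient of [t^z] in [a%:F * t^N]. *)
Definition shift_coef (N : nat) (a : fps) (z : int) : K :=
  if z <= N%:Z then fcoef a `|N%:Z - z|%N else 0.

Lemma shift_coefXn N d a :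
  shift_coef N a =1 shift_coef (N + d) (fpsX K ^+ d * a).
Proof.
move=> z; rewrite /shift_coef fcoefXnM.
case: (lerP z N%:Z) => h1.
  have -> : z <= (N + d)%N%:Z by lia.
  have -> : (d <= `|(N + d)%N%:Z - z|%N)%N by lia.
  congr (fcoef a _); lia.
case: (lerP z (N + d)%N%:Z) => // h2.
by have -> : (d <= `|(N + d)%N%:Z - z|%N)%N = false by lia.
Qed.

Lemma shift_coef_eq N M a b :
  a%:F * tinv ^ (- N%:Z) = b%:F * tinv ^ (- M%:Z) -> shift_coef N a =1 shift_coef M b.
Proof.
wlog le : N M a b / (N <= M)%N => [hw e|e].
  by case: (leqP N M) => h; [exact: hw | move=> z; rewrite (hw M N b a) // ltnW].
suff -> : b = fpsX K ^+ (M - N) * a by move=> z; rewrite (shift_coefXn N (M - N)) subnKC.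
apply/eqP; rewrite -tofrac_eq; apply/eqP.
apply: (mulIf (expfz_neq0 (- M%:Z) (tinv_neq0 K))); rewrite -e.
by rewrite (_ : - N%:Z = (M - N)%N%:Z + - M%:Z) ?tinvD ?tinvXn ?tofracM; [ring | lia].
Qed.

(* The coefficient sequence of an element of [K((1/t))]; junk outside it. *)
Definition lcoef (x : F) : int -> K :=
  let r := epsilon (inhabits (0%N, 0))
    (fun r : nat * fps => x = r.2%:F * tinv ^ (- r.1%:Z)) in
  shift_coef r.1 r.2.

Lemma lcoefE x (N : nat) a : x = a%:F * tinv ^ (- N%:Z) -> lcoef x =1 shift_coef N a.
Proof.
move=> e; apply: shift_coef_eq; rewrite -e; symmetry.
exact: (epsilon_spec (inhabits (0%N, 0))
  (fun r : nat * fps => x = r.2%:F * tinv ^ (- r.1%:Z)) (ex_intro _ (N, a) e)).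
Qed.

Lemma lbounded_lcoef x (N : nat) : deg_le x N%:Z -> lbounded (lcoef x) N.
Proof.
by move=> [a e] z hz; rewrite (lcoefE e) /shift_coef ifF //; apply/negbTE; rewrite -ltNge.
Qed.

Lemma is_laurent_lcoef x (N : nat) : deg_le x N%:Z -> is_laurent (lcoef x).
Proof. by move=> h; exists N; apply: lbounded_lcoef h. Qed.

Lemma lmulN_shift_coef N a b :
  lmulN N (shift_coef N a) (shift_coef N b) =1 shift_coef (N + N) (a * b).
Proof.
move=> z; rewrite /lmulN /shift_coef.
case: (lerP z (N + N)%N%:Z) => hz.
  have -> : `|(2 * N + 1)%N%:Z - z|%N = (`|(N + N)%N%:Z - z|%N).+1 by lia.
  rewrite fcoefM; apply: eq_bigr => [[k hk]] _ /=.
  have -> : N%:Z - k%:Z <= N%:Z by lia.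
  have -> : z - N%:Z + k%:Z <= N%:Z by lia.
  congr (fcoef a _ * fcoef b _); lia.
rewrite big1 // => [[k hk]] _ /=.
have -> : z - N%:Z + k%:Z <= N%:Z = false by lia.
by rewrite mulr0.
Qed.

Lemma lmul_eq_lcoef x y (N : nat) : deg_le x N%:Z -> deg_le y N%:Z ->
  lmul_eq (lcoef x) (lcoef y) (lcoef (x * y)).
Proof.
move=> hx hy; exists N; split; first exact: lbounded_lcoef hx.
split; first exact: lbounded_lcoef hy.
move: hx hy => [a ea] [b eb] z.
have exy : x * y = (a * b)%:F * tinv ^ (- (N + N)%N%:Z).
  by rewrite ea eb tofracM (_ : - (N + N)%N%:Z = - N%:Z + - N%:Z) ?tinvD; [ring | lia].
rewrite (lcoefE exy) -lmulN_shift_coef /lmulN; apply: eq_bigr => k _.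
by rewrite (lcoefE ea) (lcoefE eb).
Qed.

Lemma lcoefD x y (N : nat) : deg_le x N%:Z -> deg_le y N%:Z ->
  lcoef (x + y) =1 lcoef x \+ lcoef y.
Proof.
move=> [a ea] [b eb] z /=.
have e : x + y = (a + b)%:F * tinv ^ (- N%:Z) by rewrite ea eb tofracD mulrDl.
by rewrite (lcoefE e) (lcoefE ea) (lcoefE eb) /shift_coef; case: ifP; rewrite ?addr0.
Qed.

Lemma lcoefB x y (N : nat) : deg_le x N%:Z -> deg_le y N%:Z ->
  lcoef (x - y) =1 lcoef x \- lcoef y.
Proof.
move=> hx hy z; rewrite (lcoefD hx (deg_leN hy)) /=; congr (_ + _).
move: hy => [b eb]; have e : - y = (- b)%:F * tinv ^ (- N%:Z) by rewrite eb tofracN mulNr.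
by rewrite (lcoefE e) (lcoefE eb) /shift_coef; case: ifP; rewrite ?oppr0.
Qed.

Lemma lcoef_polyF (p : {poly K}) : lcoef (polyF p) =1 polyL p.
Proof.
move=> z; rewrite (lcoefE (polyF_rev (leqnSn (size p)))) /shift_coef /polyL /fps_rev /=.
set N := size p; case: z => [m|m]; last first.
  have -> : Negz m <= N%:Z by lia.
  by have -> : (`|N%:Z - Negz m|%N <= N)%N = false by lia.
case: (leqP m N) => h; last first.
  have -> : m%:Z <= N%:Z = false by lia.
  by rewrite nth_default // ltnW.
have -> : m%:Z <= N%:Z by lia.
have -> : (`|N%:Z - m%:Z|%N <= N)%N by lia.
by have -> : (N - `|N%:Z - m%:Z|)%N = m by lia.
Qed.

Lemma lcoef_nonneg_eq0 x : deg_le x (-1) -> forall m : nat, lcoef x m%:Z = 0.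
Proof.
move=> [b eb] m.
have e : x = (fpsX K * b)%:F * tinv ^ (- 0%N%:Z).
  by rewrite eb tofracM (_ : - -1 = 1) // expr1z oppr0 expr0z mulr1 mulrC.
rewrite (lcoefE e) /shift_coef; case: m => [|m]; first by rewrite lexx fcoefXM.
by have -> : m.+1%:Z <= 0%N%:Z = false by lia.
Qed.

Definition laurentF (al : int -> K) (N : nat) : F :=
  (FPS (fun k : nat => al (N%:Z - k%:Z)))%:F * tinv ^ (- N%:Z).

Lemma lcoef_laurentF al N : lbounded al N -> lcoef (laurentF al N) =1 al.
Proof.
move=> hb z; rewrite (lcoefE (erefl _)) /shift_coef /=.
by case: lerP => h; [congr al; lia | rewrite hb].
Qed.

Lemma deg_le_laurentF al N : deg_le (laurentF al N) N%:Z.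
Proof. by eexists. Qed.

Lemma lmul_eq_ext (f g h f' g' h' : int -> K) : f =1 f' -> g =1 g' -> h =1 h' ->
  lmul_eq f g h -> lmul_eq f' g' h'.
Proof.
move=> ef eg eh [N [hf [hg hh]]]; exists N.
split; first by move=> z hz; rewrite -ef hf.
split; first by move=> z hz; rewrite -eg hg.
by move=> n; rewrite -eh hh /lmulN; apply: eq_bigr => k _; rewrite ef eg.
Qed.

Lemma lmul_eq_polyF (p : {poly K}) x (N : nat) : deg_le x N%:Z ->
  lmul_eq (polyL p) (lcoef x) (lcoef (polyF p * x)).
Proof.
move=> hx; have [M [hp hxM]] := deg_le_max (deg_le_polyF p) hx.
exact: lmul_eq_ext (lcoef_polyF p) _ _ (lmul_eq_lcoef hp hxM).
Qed.

Lemma is_ratfun_polyL (p : {poly K}) : is_ratfun (polyL p).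
Proof.
exists p, 1; split; first exact: oner_neq0.
apply: lmul_eq_ext (lmul_eq_polyF 1 (deg_le_polyF p)) => // z.
  exact: lcoef_polyF.
by rewrite rmorph1 mul1r lcoef_polyF.
Qed.

Lemma inG0 : inG (fun _ : int => 0 : K).
Proof.
left; rewrite (_ : (fun _ => 0) = polyL 0); first exact: is_ratfun_polyL.
by apply: funext => -[] n; rewrite /= ?coef0.
Qed.

Lemma is_ratfun_laurentF (al : int -> K) (N : nat) (p q : {poly K}) :
  lbounded al N -> q != 0 -> polyF q * laurentF al N = polyF p -> is_ratfun al.
Proof.
move=> hb qn e; exists p, q; split => //.
apply: lmul_eq_ext (lmul_eq_polyF q (deg_le_laurentF al N)) => // z.
  exact: lcoef_laurentF.
by rewrite e lcoef_polyF.
Qed.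

End Coefficients.

(** * Continued fraction steps *)

Section Convergents.
Variable K : fieldType.
Local Notation F := {fraction (fps K)}.
Local Notation polyF := (polyF K).

(* The last two convergents [P/Q] and [P'/Q'] of a continued fraction. *)
Record conv := Conv { cP : {poly K}; cQ : {poly K}; cP' : {poly K}; cQ' : {poly K} }.

Definition conv_val X : F := polyF (cP X) / polyF (cQ X).
Definition conv_det X := cP' X * cQ X - cP X * cQ' X.
Definition conv_deg X : int := (size (cQ X)).-1.
Definition conv_next X (c : {poly K}) :=
  Conv (c * cP X + cP' X) (c * cQ X + cQ' X) (cP X) (cQ X).

Definition conv_ok X := [/\ cQ X != 0, deg_le (polyF (cQ' X)) (conv_deg X - 1) &
  exists2 d : K, d != 0 & conv_det X = d%:P].

Lemma conv_ok_neq0 X : conv_ok X -> cQ X != 0.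
Proof. by case. Qed.

Lemma conv_ok_start A : conv_ok (Conv A 1 1 0).
Proof.
split; [exact: oner_neq0 | rewrite rmorph0; exact: deg_le0 |].
by exists 1; rewrite ?oner_neq0 // /conv_det /= mulr1 mulr0 subr0.
Qed.

Lemma conv_deg_start A : conv_deg (Conv A 1 1 0) = 0.
Proof. by rewrite /conv_deg /= size_poly1. Qed.

Lemma conv_val_start A : conv_val (Conv A 1 1 0) = polyF A.
Proof. by rewrite /conv_val /= rmorph1 divr1. Qed.

Lemma deg_eq_cQ X : conv_ok X -> deg_eq (polyF (cQ X)) (conv_deg X).
Proof. by case=> hQ _ _; apply: deg_eq_polyF. Qed.

Lemma deg_eq_det X : conv_ok X -> deg_eq (polyF (conv_det X)) 0.
Proof.
case=> _ _ [d d0 ->]; rewrite polyFC; exists (fpsC d).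
by rewrite oppr0 expr0z mulr1.
Qed.

Lemma conv_next_ok X (c : {poly K}) : conv_ok X -> 0 < ((size c).-1)%:Z ->
  conv_ok (conv_next X c) /\ conv_deg (conv_next X c) = conv_deg X + (size c).-1.
Proof.
move=> hX hc; case: (hX) => hQ hQ' [d d0 hd].
have c0 : c != 0 by apply: contraTneq hc => ->; rewrite size_poly0.
have dQ2 : deg_eq (polyF (c * cQ X + cQ' X)) (((size c).-1)%:Z + conv_deg X).
  rewrite rmorphD rmorphM; apply: deg_eqD.
    exact: deg_eqM (deg_eq_polyF c0) (deg_eq_polyF hQ).
  by apply: deg_leW hQ' _; lia.
have Q20 : c * cQ X + cQ' X != 0.
  by apply: contraTneq (deg_eq_neq0 dQ2) => ->; rewrite rmorph0 eqxx.
have deg2 : conv_deg (conv_next X c) = conv_deg X + (size c).-1.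
  by rewrite addrC; apply: deg_eq_uniq (deg_eq_polyF Q20) dQ2.
split => //; split => //.
  by apply: deg_leW (deg_eq_le (deg_eq_cQ hX)) _; rewrite deg2; lia.
by exists (- d); rewrite ?oppr_eq0 // polyCN -hd /conv_det /=; ring.
Qed.

Lemma conv_next_valB X (c : {poly K}) : cQ X != 0 -> c * cQ X + cQ' X != 0 ->
  conv_val (conv_next X c) - conv_val X =
  polyF (conv_det X) / (polyF (c * cQ X + cQ' X) * polyF (cQ X)).
Proof.
move=> hQ hQ2; rewrite /conv_val /= -mulNr addf_div ?polyF_neq0 //.
congr (_ / _); rewrite -rmorphN -!rmorphM -rmorphD; congr (polyF _).
by rewrite /conv_det; ring.
Qed.

Lemma deg_eq_conv_next_valB X (c : {poly K}) : conv_ok X -> conv_ok (conv_next X c) ->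
  deg_eq (conv_val (conv_next X c) - conv_val X)
         (- (conv_deg X + conv_deg (conv_next X c))).
Proof.
move=> hX hX2; rewrite conv_next_valB; [|by case: hX|by case: hX2].
have := deg_eqM (deg_eq_det hX) (deg_eqV (deg_eqM (deg_eq_cQ hX2) (deg_eq_cQ hX))).
by rewrite add0r addrC.
Qed.

End Convergents.

Section ConvStep.
Variable K : fieldType.
Local Notation F := {fraction (fps K)}.
Local Notation polyF := (polyF K).

(* When [x = conv_val X + e], this is the complete quotient [z] with
   [x = (z P + P') / (z Q + Q')]. *)
Definition complete_quotient (X : conv K) (e : F) : F :=
  (polyF (conv_det X) / (e * polyF (cQ X)) - polyF (cQ' X)) / polyF (cQ X).

Definition next_pq (X : conv K) (e : F) : {poly K} :=
  epsilon (inhabits 0) (fun c => deg_le (complete_quotient X e - polyF c) (-1)).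

Variables (X : conv K) (e : F) (H : int).
Hypothesis hX : conv_ok X.
Hypothesis he : deg_eq e (- H).
Local Notation q := (conv_deg X).
Hypothesis hH : 2 * q < H.

Local Notation W := (polyF (conv_det X) / (e * polyF (cQ X))).
Local Notation z := (complete_quotient X e).
Local Notation c := (next_pq X e).
Local Notation r := (z - polyF c).
Local Notation Q2 := (c * cQ X + cQ' X).

Lemma deg_eq_W : deg_eq W (H - q).
Proof.
have := deg_eqM (deg_eq_det hX) (deg_eqV (deg_eqM he (deg_eq_cQ hX))).
by congr deg_eq; lia.
Qed.

Lemma deg_eq_complete_quotient : deg_eq z (H - q - q).
Proof.
have [_ hQ' _] := hX.
have dWQ : deg_eq (W - polyF (cQ' X)) (H - q).
  by apply: deg_eqD deg_eq_W _; apply: deg_leN; apply: deg_leW hQ' _; lia.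
exact: deg_eqM dWQ (deg_eqV (deg_eq_cQ hX)).
Qed.

Lemma deg_le_frac : deg_le r (-1).
Proof.
apply: (epsilon_spec (inhabits 0) (fun c => deg_le (z - polyF c) (-1))).
have hz : deg_le z `|(H - q - q)%R|%N.
  by apply: deg_leW (deg_eq_le deg_eq_complete_quotient) _; lia.
by have [c0 hc0] := poly_part_exists hz; exists c0.
Qed.

Lemma deg_eq_next_pq : deg_eq (polyF c) (H - q - q).
Proof.
rewrite (_ : polyF c = z - r); last by rewrite opprB addrC subrK.
apply: deg_eqD deg_eq_complete_quotient _; apply: deg_leN.
by apply: deg_leW deg_le_frac _; lia.
Qed.

Lemma size_next_pq : ((size c).-1)%:Z = H - 2 * q.
Proof.
have c0 : c != 0.
  by apply: contraTneq (deg_eq_neq0 deg_eq_next_pq) => ->; rewrite rmorph0 eqxx.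
by rewrite (deg_eq_uniq (deg_eq_polyF c0) deg_eq_next_pq); lia.
Qed.

Lemma polyF_Q2 : polyF Q2 = W - r * polyF (cQ X).
Proof.
have Q0 : polyF (cQ X) != 0 by case: hX => /polyF_neq0.
by rewrite rmorphD rmorphM mulrBl /complete_quotient divfK //; ring.
Qed.

Lemma conv_step_error : Q2 != 0 ->
  e - (conv_val (conv_next X c) - conv_val X) =
  - (polyF (conv_det X) * r) / (W * polyF Q2).
Proof.
move=> Q20; have [Q0 _ _] := hX; rewrite conv_next_valB //.
have eE : e = polyF (conv_det X) / (W * polyF (cQ X)).
  have eE (L : fieldType) (a E Q : L) : a != 0 -> E != 0 -> Q != 0 ->
      E = a / (a / (E * Q) * Q).
    by move=> a0 E0 Q0'; field; rewrite a0 E0 Q0'.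
  exact: eE (deg_eq_neq0 (deg_eq_det hX)) (deg_eq_neq0 he) (polyF_neq0 Q0).
have errE (L : fieldType) (a E Q R W D : L) : W != 0 -> D != 0 -> Q != 0 ->
    E = a / (W * Q) -> D = W - R * Q -> E - a / (D * Q) = - (a * R) / (W * D).
  by move=> W0 + Q0' -> eD; rewrite eD => D0; field; rewrite D0 W0 Q0'.
exact: errE (deg_eq_neq0 deg_eq_W) (polyF_neq0 Q20) (polyF_neq0 Q0) eE polyF_Q2.
Qed.

Lemma conv_step :
  [/\ ((size c).-1)%:Z = H - 2 * q, conv_ok (conv_next X c),
      conv_deg (conv_next X c) = H - q &
      deg_le (e - (conv_val (conv_next X c) - conv_val X)) (-1 - 2 * (H - q))].
Proof.
have sc := size_next_pq.
have pos : 0 < ((size c).-1)%:Z by rewrite sc; lia.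
have [ok2 deg2] := conv_next_ok hX pos.
have deg2' : conv_deg (conv_next X c) = H - q by rewrite deg2 sc; lia.
split => //; rewrite conv_step_error; last by case: ok2.
have dQ2 : deg_eq (polyF Q2) (H - q) by rewrite -deg2'; exact: deg_eq_cQ ok2.
rewrite mulNr; apply: deg_leN.
have := deg_leM (deg_leM (deg_eq_le (deg_eq_det hX)) deg_le_frac)
  (deg_eq_le (deg_eqV (deg_eqM deg_eq_W dQ2))).
by move/deg_leW; apply; lia.
Qed.

End ConvStep.

(** * Interleaving the two continued fractions *)

Section Interleaving.
Variable K : fieldType.
Local Notation F := {fraction (fps K)}.
Local Notation polyF := (polyF K).

Variables (al : int -> K) (N0 : nat) (A0 : {poly K}).
Hypothesis hb : lbounded al N0.
Hypothesis hirr : ~ is_ratfun al.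
Hypothesis hA0 : deg_le (laurentF al N0 - polyF A0) (-1).

Local Notation alF := (laurentF al N0).

Definition err (s : conv K * conv K) : F := alF - conv_val s.1 - conv_val s.2.

(* The first component is always the summand to be extended next. *)
Definition step (s : conv K * conv K) := (s.2, conv_next s.1 (next_pq s.1 (err s))).

Fixpoint state k :=
  if k is k'.+1 then step (state k') else (Conv A0 1 1 0, Conv 0 1 1 0).

Definition state_inv k := let s := state k in
  [/\ conv_ok s.1, conv_ok s.2 &
      exists H : int, [/\ deg_eq (err s) (- H), k.+1%:Z <= H - 2 * conv_deg s.1 &
                          1 <= H - 2 * conv_deg s.2]].

Lemma err_neq0 s : cQ s.1 != 0 -> cQ s.2 != 0 -> err s != 0.
Proof.
move=> q1 q2; apply/negP => /eqP e; apply: hirr.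
have [h1 h2] := (polyF_neq0 q1, polyF_neq0 q2).
apply: (@is_ratfun_laurentF _ _ N0 (cP s.1 * cQ s.2 + cP s.2 * cQ s.1) (cQ s.1 * cQ s.2)).
- exact: hb.
- exact: mulf_neq0.
have -> : alF = conv_val s.1 + conv_val s.2.
  by apply/eqP; rewrite -subr_eq0 opprD addrA -[_ - _ - _]/(err s) e.
by rewrite /conv_val addf_div // !rmorphD !rmorphM mulrC divfK // mulf_neq0.
Qed.

Lemma state_inv0 : state_inv 0.
Proof.
split; [exact: conv_ok_start | exact: conv_ok_start |].
have e : err (state 0) = alF - polyF A0.
  by rewrite /err conv_val_start /conv_val /= rmorph0 mul0r subr0.
have h0 : deg_le (err (state 0)) (-1) by rewrite e.
have [l hl dl] := deg_le_eq h0 (@err_neq0 (state 0) (oner_neq0 _) (oner_neq0 _)).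
by exists (- l); rewrite opprK !conv_deg_start; split => //; lia.
Qed.

Lemma state_invS k : state_inv k ->
  state_inv k.+1 /\ k.+1%:Z <= ((size (next_pq (state k).1 (err (state k)))).-1)%:Z.
Proof.
rewrite /state_inv /=; case: (state k) => X Y /= [hX hY [H [he h1 h2]]].
have [|sc ok2 deg2 herr] := conv_step hX he; first lia.
set X' := conv_next X _ in ok2 deg2 herr *.
have err' : err (Y, X') = err (X, Y) - (conv_val X' - conv_val X).
  by rewrite /err /=; ring.
have h' : deg_le (err (Y, X')) (-1 - 2 * (H - conv_deg X)) by rewrite err'.
have [l hl dl] := deg_le_eq h' (@err_neq0 (Y, X') (conv_ok_neq0 hY) (conv_ok_neq0 ok2)).
split; last by rewrite sc; lia.
by split => //; exists (- l); rewrite opprK deg2; split => //; lia.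
Qed.

End Interleaving.

(** * Continued fractions with growing partial quotients *)

Section Convergence.
Variable K : fieldType.
Local Notation fps := (fps K).
Local Notation F := {fraction fps}.
Local Notation "x %:F" := (@FracField.tofrac fps x).
Local Notation tinv := (tinv K).
Local Notation polyF := (polyF K).

Variables (A : {poly K}) (c : nat -> {poly K}) (X : nat -> conv K).
Hypothesis X0 : X 0%N = Conv A 1 1 0.
Hypothesis XS : forall n, X n.+1 = conv_next (X n) (c n).
Hypothesis size_c : forall n, n.+1%:Z <= ((size (c n)).-1)%:Z.

Local Notation q n := (conv_deg (X n)).
Local Notation gap n := (q n + q n.+1).
Local Notation val n := (conv_val (X n)).

Lemma size_c_gt0 n : 0 < ((size (c n)).-1)%:Z.
Proof. by have := size_c n; lia. Qed.

Lemma conv_okX n : conv_ok (X n).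
Proof.
elim: n => [|n IH]; first by rewrite X0; exact: conv_ok_start.
by rewrite XS; case: (conv_next_ok IH (size_c_gt0 n)).
Qed.

Lemma conv_degS n : q n.+1 = q n + ((size (c n)).-1)%:Z.
Proof. by rewrite XS; case: (conv_next_ok (conv_okX n) (size_c_gt0 n)). Qed.

Lemma conv_deg_ge n : n%:Z <= q n.
Proof.
elim: n => [|n IH]; first by rewrite X0 conv_deg_start.
by rewrite conv_degS; have := size_c n; lia.
Qed.

Lemma gap_ge n : n.+1%:Z <= gap n.
Proof. by rewrite conv_degS; have := size_c n; have := conv_deg_ge n; lia. Qed.

Lemma gap_mono n m : (n <= m)%N -> gap n <= gap m.
Proof.
elim: m => [|m IH]; first by rewrite leqn0 => /eqP ->.
rewrite leq_eqVlt => /orP [/eqP -> //|h].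
by apply: le_trans (IH h) _; rewrite !conv_degS; have := size_c m.+1; have := size_c m; lia.
Qed.

Lemma deg_eq_valS n : deg_eq (val n.+1 - val n) (- gap n).
Proof.
have := deg_eq_conv_next_valB (conv_okX n) (_ : conv_ok (conv_next (X n) (c n))).
by rewrite -XS; apply; exact: conv_okX.
Qed.

Lemma deg_le_valB n m : (n <= m)%N -> deg_le (val m - val n) (- gap n).
Proof.
elim: m => [|m IH]; first by rewrite leqn0 => /eqP ->; rewrite subrr; apply: deg_le0.
rewrite leq_eqVlt => /orP [/eqP -> |h]; first by rewrite subrr; apply: deg_le0.
rewrite (_ : val m.+1 - val n = (val m.+1 - val m) + (val m - val n)); last by ring.
apply: deg_leD (IH h); apply: deg_leW (deg_eq_le (deg_eq_valS m)) _.
by have := gap_mono (h : (n <= m)%N); lia.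
Qed.

Lemma deg_le_val n : deg_le (val n) (size A).
Proof.
rewrite (_ : val n = (val n - val 0%N) + polyF A); last by rewrite X0 conv_val_start; ring.
apply: deg_leD (deg_le_polyF A); apply: deg_leW (deg_le_valB (leq0n n)) _.
by have := gap_ge 0; lia.
Qed.

Definition val_series n : fps :=
  epsilon (inhabits 0) (fun a => val n = a%:F * tinv ^ (- (size A)%:Z)).

Lemma val_seriesE n : val n = (val_series n)%:F * tinv ^ (- (size A)%:Z).
Proof.
exact: (epsilon_spec (inhabits 0)
  (fun a => val n = a%:F * tinv ^ (- (size A)%:Z)) (deg_le_val n)).
Qed.

Lemma val_series_stable n m i : (n <= m)%N -> (i < size A + `|gap n|)%N ->
  fcoef (val_series m) i = fcoef (val_series n) i.
Proof.
move=> nm hi; apply/eqP; rewrite -subr_eq0 -fcoefB; apply/eqP.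
move: i hi; apply/deg_le_lowP; rewrite tofracB mulrBl -!val_seriesE.
have -> : - `|gap n|%N%:Z = - gap n by have := gap_ge n; lia.
exact: deg_le_valB.
Qed.

(* The limit of the convergents: its [i]-th coefficient is already that of [val i]. *)
Definition cf_limit : F :=
  (FPS (fun i => fcoef (val_series i) i))%:F * tinv ^ (- (size A)%:Z).

Lemma deg_le_cf_limit : deg_le cf_limit (size A).
Proof. by eexists. Qed.

Lemma deg_le_cf_limitB n : deg_le (cf_limit - val n) (- gap n).
Proof.
have -> : - gap n = - `|gap n|%N%:Z by have := gap_ge n; lia.
rewrite val_seriesE /cf_limit -mulrBl -tofracB; apply/deg_le_lowP => i hi.
rewrite fcoefB /=; apply/eqP; rewrite subr_eq0; apply/eqP.
case: (leqP n i) => h; first exact: val_series_stable.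
symmetry; apply: val_series_stable; first exact: ltnW.
by have := gap_ge i; lia.
Qed.

Lemma deg_eq_cf_limitB n : deg_eq (cf_limit - val n) (- gap n).
Proof.
rewrite (_ : cf_limit - val n = (val n.+1 - val n) + (cf_limit - val n.+1)); last by ring.
apply: deg_eqD (deg_eq_valS n) _; apply: deg_leW (deg_le_cf_limitB n.+1) _.
by rewrite !conv_degS; have := size_c n; have := size_c n.+1; lia.
Qed.

(* [rem n = Q_n L - P_n] and [rem' n = Q'_n L - P'_n] for the limit [L]; the
   complete quotients of [L] are [L] and the [- rem' n / rem n]. *)
Definition rem n := polyF (cQ (X n)) * cf_limit - polyF (cP (X n)).
Definition rem' n := polyF (cQ' (X n)) * cf_limit - polyF (cP' (X n)).

Lemma deg_eq_rem n : deg_eq (rem n) (- q n.+1).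
Proof.
have Q0 := polyF_neq0 (conv_ok_neq0 (conv_okX n)).
rewrite (_ : rem n = polyF (cQ (X n)) * (cf_limit - val n)); last first.
  by rewrite mulrBr /conv_val [_ * (_ / _)]mulrC divfK.
have := deg_eqM (deg_eq_cQ (conv_okX n)) (deg_eq_cf_limitB n).
by congr deg_eq; lia.
Qed.

Lemma rem_neq0 n : rem n != 0.
Proof. exact: deg_eq_neq0 (deg_eq_rem n). Qed.

Lemma rem'S n : rem' n.+1 = rem n.
Proof. by rewrite /rem' /rem XS. Qed.

Lemma rem'0 : rem' 0%N = -1.
Proof. by rewrite /rem' X0 /= rmorph0 rmorph1 mul0r sub0r. Qed.

Lemma deg_eq_rem' n : deg_eq (rem' n) (- q n).
Proof.
case: n => [|n]; last by rewrite rem'S; exact: deg_eq_rem.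
rewrite rem'0 X0 conv_deg_start oppr0; exists (-1).
by rewrite fcoefN fcoef1 oppr_eq0 oner_eq0 expr0z mulr1 tofracN tofrac1.
Qed.

Lemma remS n : rem n.+1 = polyF (c n) * rem n + rem' n.
Proof. by rewrite /rem /rem' XS /= !rmorphD !rmorphM; ring. Qed.

Definition pquot n : {poly K} := if n is m.+1 then c m else A.
Definition cquot n : F := if n is m.+1 then - rem' m / rem m else cf_limit.

Lemma cquotB n :
  cquot n - polyF (pquot n) = if n is m.+1 then - rem n / rem m else rem 0%N.
Proof.
case: n => [|m] /=; first by rewrite /rem X0 /= rmorph1 mul1r.
have sub (L : fieldType) (x y e : L) : e != 0 -> - y / e - x = - (x * e + y) / e.
  by move=> e0; field.
by rewrite [in RHS]remS sub ?rem_neq0.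
Qed.

Lemma deg_le_cquotB n : deg_le (cquot n - polyF (pquot n)) (-1).
Proof.
rewrite cquotB; case: n => [|m].
  by apply: deg_leW (deg_eq_le (deg_eq_rem 0)) _; have := conv_deg_ge 1; lia.
rewrite mulNr; apply/deg_leN/deg_leW.
  exact: deg_eq_le (deg_eqM (deg_eq_rem m.+1) (deg_eqV (deg_eq_rem m))).
by rewrite (conv_degS m.+1); have := size_c m.+1; lia.
Qed.

Lemma cquotBM n : (cquot n - polyF (pquot n)) * cquot n.+1 = 1.
Proof.
rewrite cquotB; case: n => [|m] /=; first by rewrite rem'0 opprK mul1r mulfV ?rem_neq0.
have inv (L : fieldType) (x y : L) : x != 0 -> y != 0 -> (- x / y) * (- y / x) = 1.
  by move=> x0 y0; field; rewrite x0 y0.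
by rewrite rem'S inv ?rem_neq0.
Qed.

Lemma deg_le_cquot n : exists N : nat, deg_le (cquot n) N%:Z.
Proof.
case: n => [|m] /=; first by exists (size A); exact: deg_le_cf_limit.
exists (size (c m)).-1; rewrite mulNr; apply/deg_leN/deg_leW.
  exact: deg_eq_le (deg_eqM (deg_eq_rem' m) (deg_eqV (deg_eq_rem m))).
by rewrite conv_degS; lia.
Qed.

Lemma cf_limit_inG : inG (lcoef cf_limit).
Proof.
right; exists pquot, (fun n => lcoef (cquot n)); split; last first.
  move=> M; exists M.+1 => -[|m] //= hm.
  by have := size_c m; rewrite lez_nat; apply: leq_trans; rewrite leqW.
split => // n; have [N hN] := deg_le_cquot n.
split; first exact: is_laurent_lcoef hN.
have [M [hA hB]] := deg_le_max (deg_le_polyF (pquot n)) (deg_le_cquotB n).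
split.
  move=> m hm; have hl := lcoef_nonneg_eq0 (deg_le_cquotB n).
  have -> : cquot n = polyF (pquot n) + (cquot n - polyF (pquot n)) by rewrite addrC subrK.
  rewrite (lcoefD hA hB) /= lcoef_polyF.
  by case: m hm => m // _; rewrite hl addr0.
have [N1 hN1] := deg_le_cquot n.+1.
have [N2 [h1 h2]] := deg_le_max (deg_le_cquotB n) hN1.
apply: lmul_eq_ext (lmul_eq_lcoef h1 h2) => [z||z].
- have [N3 [h3 h4]] := deg_le_max hN (deg_le_polyF (pquot n)).
  by rewrite (lcoefB h3 h4) /= lcoef_polyF.
- by [].
- by rewrite cquotBM -lcoef_polyF rmorph1.
Qed.

End Convergence.

Section Decomposition.
Variable K : fieldType.
Local Notation F := {fraction (fps K)}.
Local Notation polyF := (polyF K).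

Variables (al : int -> K) (N0 : nat) (A0 : {poly K}).
Hypothesis hb : lbounded al N0.
Hypothesis hirr : ~ is_ratfun al.
Hypothesis hA0 : deg_le (laurentF al N0 - polyF A0) (-1).

Local Notation state := (state al N0 A0).
Local Notation err := (err al N0).
Local Notation pq k := (next_pq (state k).1 (err (state k))).

Lemma state_invP k : state_inv al N0 A0 k.
Proof.
elim: k => [|k IH]; first exact: state_inv0.
by case: (state_invS hb hirr IH).
Qed.

Lemma deg_le_err_double n : deg_le (err (state n.*2)) (- n%:Z).
Proof.
have [_ _ [H [he h1 _]]] := state_invP n.*2.
apply: deg_leW (deg_eq_le he) _.
have : 0 <= conv_deg (state n.*2).1 by [].
by move: h1; rewrite -addnn; lia.
Qed.

(* The convergents of one summand are read off every other state, starting at [p]. *)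
Lemma summand p A : (state p).1 = Conv A 1 1 0 ->
  exists L : F, [/\ deg_le L (size A), inG (lcoef L) &
    forall n, deg_le (L - conv_val (state (n.*2 + p)).1) (- n.+1%:Z)].
Proof.
set X := fun n => (state (n.*2 + p)).1; set c := fun n => pq (n.*2 + p) => X0.
have XS n : X n.+1 = conv_next (X n) (c n) by rewrite /X doubleS addSn addSn.
have size_c n : n.+1%:Z <= ((size (c n)).-1)%:Z.
  have [_ h] := state_invS hb hirr (state_invP (n.*2 + p)).
  by apply: le_trans h; rewrite -addnn; lia.
exists (cf_limit A X); split.
- exact: deg_le_cf_limit.
- exact: cf_limit_inG XS size_c.
- move=> n; apply: deg_leW (deg_le_cf_limitB X0 XS size_c n) _.
  by have := gap_ge X0 XS size_c n; lia.
Qed.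

Lemma laurentF_decomposition : exists (L1 L2 : F) (N : nat),
  [/\ deg_le L1 N%:Z, deg_le L2 N%:Z, inG (lcoef L1), inG (lcoef L2) &
      laurentF al N0 = L1 + L2].
Proof.
have [L1 [h1 g1 t1]] := @summand 0 A0 erefl.
have [L2 [h2 g2 t2]] := @summand 1 0 erefl.
have [N [h1' h2']] := deg_le_max h1 h2.
exists L1, L2, N; split => //; apply/eqP; rewrite -subr_eq0; apply/eqP.
apply: (@deg_le_eq0 _ _ 0) => n; rewrite sub0r.
have -> : laurentF al N0 - (L1 + L2) = err (state n.*2) -
    (L1 - conv_val (state (n.*2 + 0)).1) - (L2 - conv_val (state (n.*2 + 1)).1).
  by rewrite /err addn0 addn1 /=; ring.
apply: deg_leB; [apply: deg_leB|]; first exact: deg_le_err_double.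
- by apply: deg_leW (t1 n) _; lia.
- by apply: deg_leW (t2 n) _; lia.
Qed.

End Decomposition.

Theorem theorem1p3 (K : fieldType) (alpha : int -> K) :
  is_laurent alpha ->
  exists beta gamma : int -> K,
    [/\ is_laurent beta, is_laurent gamma, inG beta, inG gamma &
        forall n : int, alpha n = beta n + gamma n].
Proof.
move=> [N0 hb]; case: (classic (is_ratfun alpha)) => hr.
  exists alpha, (fun _ => 0).
  split; [by exists N0 | by exists 0%N | by left | exact: inG0 | by move=> n; rewrite addr0].
have [A0 hA0] := poly_part_exists (deg_le_laurentF alpha N0).
have [L1 [L2 [N [h1 h2 g1 g2 e]]]] := laurentF_decomposition hb hr hA0.
exists (lcoef L1), (lcoef L2); split => //; first exact: is_laurent_lcoef h1.
- exact: is_laurent_lcoef h2.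
- by move=> n; rewrite -(lcoef_laurentF hb) e (lcoefD h1 h2).
Qed.
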